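(* Let $0<q<1$, $p=q^{1/2}$, $\alpha,\beta>-1$ real, and let $b_n=b_n^{(\alpha,\beta)}$ be the polynomials defined by the recurrence below. Then for every $n\ge0$ and $\mu\in\mathbb C$, $$b_n(\mu)=\sum_{j=0}^n\frac{(p^{-\beta-n-1},-p^{-\alpha-n-1};p)_j}{(p,p^{-2n-\alpha-\beta-2};p)_j}(-1)^jp^{j/2}\mu^{n-j}\;{}_4\phi_3\!\left(p^{-j},p^{2n+\alpha+\beta+3-j},p^{\beta+1},-p^{\alpha+1};\,p^{\alpha+\beta+2},p^{n+\beta+2-j},-p^{\alpha+n+2-j};\,p,p\right).$$
   Context: Notation: $(a;p)_0=1$, $(a;p)_n=\prod_{j=0}^{n-1}(1-ap^j)$, $(a_1,\dots,a_m;p)_n=\prod_k(a_k;p)_n$; ${}_4\phi_3(a_1,\dots,a_4;b_1,b_2,b_3;p,z)=\sum_{k\ge0}\frac{(a_1,a_2,a_3,a_4;p)_k}{(p,b_1,b_2,b_3;p)_k}z^k$. The polynomials $b_n=b_n^{(\alpha,\beta)}$ are defined by $b_{-1}(\mu)=0$, $b_0(\mu)=1$, and for $k\ge0$ $$b_{k+1}(\mu)=\Big[\mu+\frac{(1-p^{\beta-\alpha})(1+p^{\alpha+\beta+3+2k})}{(1-p^{\alpha+\beta+2+2k})(1-p^{\alpha+\beta+4+2k})}p^{\alpha+3/2+k}\Big]b_k(\mu)+\frac{(1-p^{2\alpha+2+2k})(1-p^{2\beta+2+2k})\,p^{2k+\alpha+\beta+2}}{(1-p^{\alpha+\beta+1+2k})(1-p^{\alpha+\beta+2+2k})^2(1-p^{\alpha+\beta+3+2k})}\,b_{k-1}(\mu).$$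 *)

From Stdlib Require Import Reals.
From Coquelicot Require Import Coquelicot.
Open Scope R_scope.

Definition rpow (p x : R) : R := Rpower p x.

Fixpoint qpoch (p a : R) (n : nat) : R :=
  match n with
  | O => 1
  | S m => qpoch p a m * (1 - a * p ^ m)
  end.

Definition phi43_term (a1 a2 a3 a4 b1 b2 b3 p z : R) (k : nat) : R :=
  (qpoch p a1 k * qpoch p a2 k * qpoch p a3 k * qpoch p a4 k)
  / (qpoch p p k * qpoch p b1 k * qpoch p b2 k * qpoch p b3 k) * z ^ k.

Definition phi43 (a1 a2 a3 a4 b1 b2 b3 p z : R) : R :=
  Series (phi43_term a1 a2 a3 a4 b1 b2 b3 p z).

Definition rec_c (p al be : R) (k : nat) : R :=
  let K := INR k in
  (1 - rpow p (be - al)) * (1 + rpow p (al + be + 3 + 2 * K))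
  / ((1 - rpow p (al + be + 2 + 2 * K)) * (1 - rpow p (al + be + 4 + 2 * K)))
  * rpow p (al + 3 / 2 + K).

Definition rec_d (p al be : R) (k : nat) : R :=
  let K := INR k in
  (1 - rpow p (2 * al + 2 + 2 * K)) * (1 - rpow p (2 * be + 2 + 2 * K))
  * rpow p (2 * K + al + be + 2)
  / ((1 - rpow p (al + be + 1 + 2 * K)) * (1 - rpow p (al + be + 2 + 2 * K)) ^ 2
     * (1 - rpow p (al + be + 3 + 2 * K))).

(* pair (b_{k-1}(mu), b_k(mu)), with b_{-1} = 0, b_0 = 1 *)
Fixpoint bpair (p al be : R) (mu : C) (k : nat) : C * C :=
  match k with
  | O => (RtoC 0, RtoC 1)
  | S m =>
      let '(bm1, bm) := bpair p al be mu m in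
      (bm, Cplus (Cmult (Cplus mu (RtoC (rec_c p al be m))) bm)
                 (Cmult (RtoC (rec_d p al be m)) bm1))
  end.

Definition bpoly (p al be : R) (n : nat) (mu : C) : C := snd (bpair p al be mu n).

Fixpoint Cpow (z : C) (n : nat) : C :=
  match n with O => RtoC 1 | S m => Cmult (Cpow z m) z end.

Fixpoint Csum (f : nat -> C) (n : nat) : C :=
  match n with O => f O | S m => Cplus (Csum f m) (f (S m)) end.

Definition rhs_term (p al be : R) (n : nat) (mu : C) (j : nat) : C :=
  let N := INR n in let J := INR j in
  Cmult (RtoC (
    qpoch p (rpow p (- be - N - 1)) j * qpoch p (- rpow p (- al - N - 1)) j
    / (qpoch p p j * qpoch p (rpow p (- 2 * N - al - be - 2)) j)
    * (-1) ^ j * rpow p (J / 2)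
    * phi43 (rpow p (- J)) (rpow p (2 * N + al + be + 3 - J)) (rpow p (be + 1))
            (- rpow p (al + 1))
            (rpow p (al + be + 2)) (rpow p (N + be + 2 - J)) (- rpow p (al + N + 2 - J))
            p p))
   (Cpow mu (n - j)).

(* The coefficient of [mu ^ (n - j)] on the right-hand side is a Cauchy product
   [conv n j = sum_(k <= j) ucoef k * vcoef n (j - k)]: [ucoef k] is the [k]-th term of the
   4phi3 with its [n]-dependent parameters removed, and [vcoef n m] is the prefactor, a
   2phi1-type coefficient.  The sequences [vcoef n] satisfy the three-term recurrence of [b_n]
   coefficientwise; since [ucoef] does not depend on [n], so do the convolutions.  The only
   coefficient that could spoil the recurrence, [conv n (n + 1)], vanishes by the terminating
   q-Chu--Vandermonde sum.  Hence both sides obey the same recurrence with the same initial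
   values. *)

From Pilot Require Import Defs.
From Stdlib Require Import Reals Lra Lia Field.
From Coquelicot Require Import Coquelicot.
Open Scope R_scope.

Lemma qpoch_S p a k : qpoch p a (S k) = qpoch p a k * (1 - a * p ^ k).
Proof. reflexivity. Qed.

Lemma qpoch_Sl p a k : qpoch p a (S k) = (1 - a) * qpoch p (a * p) k.
Proof.
  revert a; induction k as [|k IH]; intros a; rewrite qpoch_S.
  - simpl; ring.
  - rewrite IH, qpoch_S; simpl; ring.
Qed.

Lemma qpoch_eq0 p a k i : (i < k)%nat -> 1 - a * p ^ i = 0 -> qpoch p a k = 0.
Proof.
  induction k as [|k IH]; intros Hik Hi; [lia|].
  rewrite qpoch_S; destruct (Nat.eq_dec i k) as [->|Hne].
  - rewrite Hi; ring.
  - rewrite IH by (lia || assumption); ring.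
Qed.

Lemma qpoch_neq0 p a k :
  (forall i, (i < k)%nat -> 1 - a * p ^ i <> 0) -> qpoch p a k <> 0.
Proof.
  induction k as [|k IH]; intros H; simpl; [lra|].
  apply Rmult_integral_contrapositive_currified; auto.
Qed.

(* A telescoping partial sum; for [x = p^-K] its right-hand side vanishes,
   which is the terminating q-Chu--Vandermonde sum at [z = p]. *)
Lemma qchu_partial_sum p x y K :
  (forall i, 1 - p * p ^ i <> 0) -> (forall i, 1 - x * y * p * p ^ i <> 0) ->
  sum_f_R0 (fun k => qpoch p x k * qpoch p y k / (qpoch p p k * qpoch p (x * y * p) k) * p ^ k) K
  = qpoch p (x * p) K * qpoch p (y * p) K / (qpoch p p K * qpoch p (x * y * p) K).
Proof.
  intros Hp Hxy.
  assert (Q1 : forall k, qpoch p p k <> 0) by (intros; apply qpoch_neq0; auto).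
  assert (Q2 : forall k, qpoch p (x * y * p) k <> 0) by (intros; apply qpoch_neq0; auto).
  induction K as [|K IH]; [simpl; field|].
  rewrite tech5, IH, (qpoch_Sl p x K), (qpoch_Sl p y K), !(qpoch_S _ _ K).
  cbn [pow]; field; repeat split; auto.
Qed.

Lemma Series_finite (f : nat -> R) j :
  (forall k, (j < k)%nat -> f k = 0) -> Series f = sum_f_R0 f j.
Proof.
  intros H. apply is_series_unique, (filterlim_ext_loc (fun _ => sum_f_R0 f j)).
  - exists j; intros N HN; rewrite sum_n_Reals.
    induction N as [|N IH]; [replace j with 0%nat by lia; reflexivity|].
    destruct (Nat.eq_dec j (S N)) as [->|Hne]; [reflexivity|].
    rewrite tech5, <- IH, (H (S N)) by lia; ring.
  - apply filterlim_const.
Qed.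

Lemma sum_f_R0_scal c (f : nat -> R) N : c * sum_f_R0 f N = sum_f_R0 (fun k => c * f k) N.
Proof. induction N as [|N IH]; simpl; [|rewrite <- IH]; ring. Qed.

Definition shift (g : nat -> R) j := match j with O => 0 | S j' => g j' end.

Lemma sum_f_R0_shift (u g : nat -> R) j :
  sum_f_R0 (fun k => u k * shift g (j - k)) j
  = shift (fun i => sum_f_R0 (fun k => u k * g (i - k)%nat) i) j.
Proof.
  destruct j as [|j]; [simpl; ring|].
  rewrite tech5, Nat.sub_diag; cbn [shift]; rewrite Rmult_0_r, Rplus_0_r.
  apply sum_eq; intros k Hk; replace (S j - k)%nat with (S (j - k)) by lia; reflexivity.
Qed.

Lemma rpow_plus p x y : rpow p (x + y) = rpow p x * rpow p y.
Proof. apply Rpower_plus. Qed.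

Lemma rpow_nat p n : 0 < p -> rpow p (INR n) = p ^ n.
Proof. apply Rpower_pow. Qed.

Lemma rpow_pos p x : 0 < rpow p x.
Proof. apply exp_pos. Qed.

Lemma rpow_0 p : rpow p 0 = 1.
Proof. unfold rpow, Rpower; rewrite Rmult_0_l; apply exp_0. Qed.

Lemma rpow_sub_neq0 p x y : 0 < p < 1 -> x <> y -> rpow p x - rpow p y <> 0.
Proof.
  intros Hp Hxy E. apply Hxy.
  assert (Hln : ln p < 0) by (rewrite <- ln_1; apply ln_increasing; lra).
  assert (Hxy' : ln (rpow p x) = ln (rpow p y)) by (f_equal; lra).
  unfold rpow in Hxy'; rewrite !ln_Rpower in Hxy'.
  apply Rmult_eq_reg_r with (ln p); lra.
Qed.

Lemma one_sub_rpow_neq0 p x : 0 < p < 1 -> x <> 0 -> 1 - rpow p x <> 0.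
Proof. intros Hp Hx; rewrite <- (rpow_0 p); apply rpow_sub_neq0; auto. Qed.

Lemma rpow_sub_one_neq0 p x : 0 < p < 1 -> x <> 0 -> rpow p x - 1 <> 0.
Proof. intros Hp Hx; rewrite <- (rpow_0 p); apply rpow_sub_neq0; auto. Qed.

Lemma exp_pow x n : exp x ^ n = exp (INR n * x).
Proof.
  induction n as [|n IH]; [simpl; rewrite Rmult_0_l, exp_0; reflexivity|].
  rewrite <- tech_pow_Rmult, IH, S_INR, <- exp_plus; f_equal; ring.
Qed.

(* Proves [M1 = M2] or [M1 = - M2] for monomials in [p], [p ^ k] and [rpow p x],
   by writing [p = exp L] and comparing exponents. *)
Ltac solve_rpow Hp :=
  let HL := fresh "HL" in let L := fresh "L" in
  repeat rewrite S_INR; repeat rewrite plus_INR;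
  unfold rpow, Rpower, Rdiv;
  pose proof (exp_ln _ Hp) as HL; set (L := ln _) in *; clearbody L;
  try rewrite <- HL;
  repeat rewrite Ropp_mult_distr_l_reverse;
  repeat (rewrite exp_pow || rewrite <- exp_plus || rewrite <- exp_Ropp);
  lazymatch goal with
  | |- exp _ = exp _ => apply f_equal
  | |- - exp _ = - exp _ => do 2 apply f_equal
  end;
  repeat rewrite S_INR; repeat rewrite plus_INR; simpl INR; field.

Ltac rpow_exponent p E :=
  lazymatch E with
  | rpow p ?x => constr:(x)
  | p => constr:(1)
  | p ^ ?k => constr:(INR k)
  | ?A * ?B => let x := rpow_exponent p A in let y := rpow_exponent p B in constr:(x + y)
  | ?A / ?B => let x := rpow_exponent p A in let y := rpow_exponent p B in constr:(x - y)
  | / ?A => let x := rpow_exponent p A in constr:(- x)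
  end.

(* Nonvanishing of [M], [1 - M], [M - 1], [M1 - M2] (also with [- M] in place of [M]) for
   monomials [M], and of q-Pochhammer symbols of such factors.  The resulting conditions on
   exponents are left to [lra], so the needed bounds must already be in the context. *)
Ltac neq0 Hp :=
  let p := lazymatch type of Hp with 0 < ?p < 1 => p end in
  let Hp0 := fresh "Hp0" in
  assert (Hp0 : 0 < p) by lra;
  lazymatch goal with
  | |- qpoch p _ ?k <> 0 =>
      let i := fresh "i" in let Hi := fresh "Hi" in
      apply qpoch_neq0; intros i Hi; apply le_INR in Hi; rewrite ?S_INR in Hi;
      pose proof (pos_INR i); neq0 Hp
  | |- 1 - - ?E * ?F <> 0 => rewrite Ropp_mult_distr_l_reverse; neq0 Hp
  | |- 1 - - ?E <> 0 =>
      let x := rpow_exponent p E in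
      replace E with (rpow p x) by solve_rpow Hp0; generalize (rpow_pos p x); lra
  | |- 1 - ?E <> 0 =>
      let x := rpow_exponent p E in
      replace E with (rpow p x) by solve_rpow Hp0;
      apply one_sub_rpow_neq0; [exact Hp|]; rewrite ?S_INR, ?plus_INR; lra
  | |- ?E - 1 <> 0 =>
      let x := rpow_exponent p E in
      replace E with (rpow p x) by solve_rpow Hp0;
      apply rpow_sub_one_neq0; [exact Hp|]; rewrite ?S_INR, ?plus_INR; lra
  | |- ?E - - ?F <> 0 =>
      let x := rpow_exponent p E in let y := rpow_exponent p F in
      replace E with (rpow p x) by solve_rpow Hp0; replace F with (rpow p y) by solve_rpow Hp0;
      generalize (rpow_pos p x) (rpow_pos p y); lra
  | |- ?E - ?F <> 0 =>
      let x := rpow_exponent p E in let y := rpow_exponent p F in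
      replace E with (rpow p x) by solve_rpow Hp0; replace F with (rpow p y) by solve_rpow Hp0;
      apply rpow_sub_neq0; [exact Hp|]; rewrite ?S_INR, ?plus_INR; lra
  | |- ?E <> 0 =>
      let x := rpow_exponent p E in
      replace E with (rpow p x) by solve_rpow Hp0; generalize (rpow_pos p x); lra
  end.

Lemma Csum_ext (f g : nat -> C) n :
  (forall j, (j <= n)%nat -> f j = g j) -> Csum f n = Csum g n.
Proof.
  induction n as [|n IH]; intros E; simpl; [apply E; lia|].
  rewrite IH by (intros; apply E; lia); rewrite E by lia; reflexivity.
Qed.

Lemma Csum_Sl (f : nat -> C) n : Csum f (S n) = Cplus (f 0%nat) (Csum (fun j => f (S j)) n).
Proof.
  induction n as [|n IH]; [reflexivity|].
  change (Csum f (S (S n))) with (Cplus (Csum f (S n)) (f (S (S n)))).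
  rewrite IH; simpl; ring.
Qed.

Lemma Csum_mulr (f : nat -> C) c n : Csum (fun j => Cmult (f j) c) n = Cmult (Csum f n) c.
Proof. induction n as [|n IH]; simpl; [|rewrite IH]; ring. Qed.

Lemma Csum_lin (f g h : nat -> C) c d n :
  Csum (fun j => Cplus (Cplus (f j) (Cmult c (g j))) (Cmult d (h j))) n =
  Cplus (Cplus (Csum f n) (Cmult c (Csum g n))) (Cmult d (Csum h n)).
Proof. induction n as [|n IH]; simpl; [|rewrite IH]; ring. Qed.

Definition coef_poly (f : nat -> R) (mu : C) n : C :=
  Csum (fun j => Cmult (RtoC (f j)) (Defs.Cpow mu (n - j))) n.

Lemma coef_poly_ext f g mu n :
  (forall j, (j <= n)%nat -> f j = g j) -> coef_poly f mu n = coef_poly g mu n.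
Proof. intros E; apply Csum_ext; intros j Hj; rewrite E by auto; reflexivity. Qed.

Lemma coef_poly_S f mu n :
  coef_poly f mu (S n) = Cplus (Cmult mu (coef_poly f mu n)) (RtoC (f (S n))).
Proof.
  unfold coef_poly; cbn [Csum]; rewrite Nat.sub_diag.
  rewrite (Csum_ext _ (fun j => Cmult (Cmult (RtoC (f j)) (Defs.Cpow mu (n - j))) mu)),
    Csum_mulr by (intros j Hj; replace (S n - j)%nat with (S (n - j)) by lia; simpl; ring).
  simpl; ring.
Qed.

Lemma coef_poly_shift f mu n : coef_poly (shift f) mu (S n) = coef_poly f mu n.
Proof.
  unfold coef_poly; rewrite Csum_Sl; simpl; ring.
Qed.

Lemma coef_poly_shift_0 f mu : coef_poly (shift f) mu 0 = RtoC 0.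
Proof. unfold coef_poly; cbn; ring. Qed.

Lemma coef_poly_lin f g h c d mu n :
  coef_poly (fun j => f j + c * g j + d * h j) mu n =
  Cplus (Cplus (coef_poly f mu n) (Cmult (RtoC c) (coef_poly g mu n)))
        (Cmult (RtoC d) (coef_poly h mu n)).
Proof.
  unfold coef_poly; rewrite <- Csum_lin; apply Csum_ext; intros j Hj.
  rewrite !RtoC_plus, !RtoC_mult; ring.
Qed.

Lemma phi43_term_S a1 a2 a3 a4 b1 b2 b3 p z k :
  qpoch p p (S k) <> 0 -> qpoch p b1 (S k) <> 0 -> qpoch p b2 (S k) <> 0 ->
  qpoch p b3 (S k) <> 0 ->
  phi43_term a1 a2 a3 a4 b1 b2 b3 p z (S k) =
  phi43_term a1 a2 a3 a4 b1 b2 b3 p z k *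
  ((1 - a1 * p ^ k) * (1 - a2 * p ^ k) * (1 - a3 * p ^ k) * (1 - a4 * p ^ k)
   / ((1 - p * p ^ k) * (1 - b1 * p ^ k) * (1 - b2 * p ^ k) * (1 - b3 * p ^ k)) * z).
Proof.
  rewrite !qpoch_S; intros H1 H2 H3 H4.
  apply Rmult_neq_0_reg in H1, H2, H3, H4.
  unfold phi43_term; rewrite !qpoch_S; cbn [pow]; field; tauto.
Qed.

Lemma bpoly_0 p al be mu : bpoly p al be 0 mu = RtoC 1.
Proof. reflexivity. Qed.

Lemma bpoly_1 p al be mu :
  bpoly p al be 1 mu = Cmult (Cplus mu (RtoC (rec_c p al be 0))) (RtoC 1).
Proof. unfold bpoly; simpl; ring. Qed.

Lemma bpoly_SS p al be mu n :
  bpoly p al be (S (S n)) mu =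
  Cplus (Cmult (Cplus mu (RtoC (rec_c p al be (S n)))) (bpoly p al be (S n) mu))
        (Cmult (RtoC (rec_d p al be (S n))) (bpoly p al be n mu)).
Proof.
  unfold bpoly; cbn [bpair]; destruct (bpair p al be mu n); reflexivity.
Qed.

Section Coefficients.

Variables p al be : R.
Hypothesis Hp : 0 < p < 1.
Hypothesis Hal : -1 < al.
Hypothesis Hbe : -1 < be.

Let Hp0 : 0 < p.
Proof. lra. Qed.

Lemma rpow_half_S k : rpow p (INR (S k) / 2) = rpow p (INR k / 2) * rpow p (1 / 2).
Proof. rewrite S_INR, <- rpow_plus; f_equal; field. Qed.

Definition ucoef k :=
  qpoch p (rpow p (be + 1)) k * qpoch p (- rpow p (al + 1)) k
  / (qpoch p p k * qpoch p (rpow p (al + be + 2)) k) * rpow p (INR k / 2).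

Definition vterm B C D m :=
  qpoch p B m * qpoch p C m / (qpoch p p m * qpoch p D m) * (-1) ^ m * rpow p (INR m / 2).

Definition vcoef n :=
  vterm (rpow p (- be - INR n - 1)) (- rpow p (- al - INR n - 1))
        (rpow p (- 2 * INR n - al - be - 2)).

Definition phi_term n j :=
  phi43_term (rpow p (- INR j)) (rpow p (2 * INR n + al + be + 3 - INR j)) (rpow p (be + 1))
    (- rpow p (al + 1)) (rpow p (al + be + 2)) (rpow p (INR n + be + 2 - INR j))
    (- rpow p (al + INR n + 2 - INR j)) p p.

Lemma phi43_terminating n j :
  phi43 (rpow p (- INR j)) (rpow p (2 * INR n + al + be + 3 - INR j)) (rpow p (be + 1))
    (- rpow p (al + 1)) (rpow p (al + be + 2)) (rpow p (INR n + be + 2 - INR j))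
    (- rpow p (al + INR n + 2 - INR j)) p p
  = sum_f_R0 (phi_term n j) j.
Proof.
  apply Series_finite; intros k Hk; unfold phi_term, phi43_term.
  rewrite (qpoch_eq0 p (rpow p (- INR j)) k j Hk); [unfold Rdiv; ring|].
  rewrite <- rpow_nat, <- rpow_plus, Rplus_opp_l, rpow_0 by lra; ring.
Qed.

Lemma ucoef_0 : ucoef 0 = 1.
Proof. unfold ucoef; cbn [qpoch INR]; rewrite Rdiv_0_l, rpow_0; field. Qed.

Lemma vterm_0 B C D : vterm B C D 0 = 1.
Proof. unfold vterm; cbn [qpoch pow INR]; rewrite Rdiv_0_l, rpow_0; field. Qed.

Lemma ucoef_S k :
  ucoef (S k) = ucoef k *
   ((1 - rpow p (be + 1) * p ^ k) * (1 - - rpow p (al + 1) * p ^ k)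
    / ((1 - p * p ^ k) * (1 - rpow p (al + be + 2) * p ^ k)) * rpow p (1 / 2)).
Proof.
  pose proof (pos_INR k).
  assert (qpoch p p k <> 0) by neq0 Hp.
  assert (qpoch p (rpow p (al + be + 2)) k <> 0) by neq0 Hp.
  assert (1 - p * p ^ k <> 0) by neq0 Hp.
  assert (1 - rpow p (al + be + 2) * p ^ k <> 0) by neq0 Hp.
  unfold ucoef; rewrite rpow_half_S, !qpoch_S; field; auto.
Qed.

Lemma vterm_S B C D m :
  qpoch p D (S m) <> 0 ->
  vterm B C D (S m) = vterm B C D m *
   ((1 - B * p ^ m) * (1 - C * p ^ m) / ((1 - p * p ^ m) * (1 - D * p ^ m)) * (-1) * rpow p (1 / 2)).
Proof.
  rewrite qpoch_S; intros HD; apply Rmult_neq_0_reg in HD.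
  pose proof (pos_INR m).
  assert (qpoch p p m <> 0) by neq0 Hp.
  assert (1 - p * p ^ m <> 0) by neq0 Hp.
  unfold vterm; rewrite rpow_half_S, !qpoch_S; cbn [pow]; field; tauto.
Qed.

Lemma vcoef_phi_ratio n k m : (m <= n)%nat ->
  ((1 - rpow p (- be - INR n - 1) * p ^ m) * (1 - - rpow p (- al - INR n - 1) * p ^ m)
   / ((1 - p * p ^ m) * (1 - rpow p (- 2 * INR n - al - be - 2) * p ^ m)) * (-1) * rpow p (1 / 2))
  * ((1 - rpow p (- INR (S (k + m))) * p ^ k)
     * (1 - rpow p (2 * INR n + al + be + 3 - INR (S (k + m))) * p ^ k)
     * (1 - rpow p (be + 1) * p ^ k) * (1 - - rpow p (al + 1) * p ^ k)
     / ((1 - p * p ^ k) * (1 - rpow p (al + be + 2) * p ^ k)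
        * (1 - rpow p (INR n + be + 2 - INR (S (k + m))) * p ^ k)
        * (1 - - rpow p (al + INR n + 2 - INR (S (k + m))) * p ^ k)) * p)
  = (1 - rpow p (be + 1) * p ^ k) * (1 - - rpow p (al + 1) * p ^ k)
    / ((1 - p * p ^ k) * (1 - rpow p (al + be + 2) * p ^ k)) * rpow p (1 / 2).
Proof.
  intros Hmn; apply le_INR in Hmn.
  pose proof (pos_INR k); pose proof (pos_INR m).
  replace (rpow p (- be - INR n - 1)) with (/ (rpow p be * p * p ^ n)) by solve_rpow Hp0.
  replace (rpow p (- al - INR n - 1)) with (/ (rpow p al * p * p ^ n)) by solve_rpow Hp0.
  replace (rpow p (- 2 * INR n - al - be - 2)) with (/ (rpow p al * rpow p be * p * p * p ^ n * p ^ n)) by solve_rpow Hp0.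
  replace (rpow p (- INR (S (k + m)))) with (/ (p ^ k * p ^ m * p)) by solve_rpow Hp0.
  replace (rpow p (2 * INR n + al + be + 3 - INR (S (k + m))))
    with (rpow p al * rpow p be * p * p * p ^ n * p ^ n / (p ^ k * p ^ m)) by solve_rpow Hp0.
  replace (rpow p (be + 1)) with (rpow p be * p) by solve_rpow Hp0.
  replace (rpow p (al + 1)) with (rpow p al * p) by solve_rpow Hp0.
  replace (rpow p (al + be + 2)) with (rpow p al * rpow p be * p * p) by solve_rpow Hp0.
  replace (rpow p (INR n + be + 2 - INR (S (k + m)))) with (rpow p be * p * p ^ n / (p ^ k * p ^ m)) by solve_rpow Hp0.
  replace (rpow p (al + INR n + 2 - INR (S (k + m)))) with (rpow p al * p * p ^ n / (p ^ k * p ^ m)) by solve_rpow Hp0.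
  field; repeat split; neq0 Hp.
Qed.

Lemma vcoef_phi_term n j k : (k <= j)%nat -> (j <= S n)%nat ->
  vcoef n j * phi_term n j k = ucoef k * vcoef n (j - k).
Proof.
  intros Hkj Hjn; induction k as [|k IH].
  - unfold phi_term, phi43_term; cbn [qpoch pow]; rewrite ucoef_0, Nat.sub_0_r; field.
  - destruct (Nat.le_exists_sub (S k) j Hkj) as [m [Hj _]].
    assert (j = S (k + m)) as -> by lia.
    specialize (IH ltac:(lia)).
    replace (S (k + m) - k)%nat with (S m) in IH by lia.
    replace (S (k + m) - S k)%nat with m by lia.
    pose proof (pos_INR k); pose proof (pos_INR m).
    assert (Hkm : INR k + INR m <= INR n) by (rewrite <- plus_INR; apply le_INR; lia).
    unfold phi_term; rewrite phi43_term_S by neq0 Hp.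
    unfold vcoef in IH; rewrite (vterm_S _ _ _ m) in IH by neq0 Hp.
    rewrite ucoef_S, <- (vcoef_phi_ratio n k m) by lia.
    fold (phi_term n (S (k + m)) k); unfold vcoef.
    rewrite <- Rmult_assoc, IH; ring.
Qed.

Definition conv n j := sum_f_R0 (fun k => ucoef k * vcoef n (j - k)) j.

Lemma vcoef_phi43 n j : (j <= S n)%nat ->
  vcoef n j * phi43 (rpow p (- INR j)) (rpow p (2 * INR n + al + be + 3 - INR j))
    (rpow p (be + 1)) (- rpow p (al + 1)) (rpow p (al + be + 2))
    (rpow p (INR n + be + 2 - INR j)) (- rpow p (al + INR n + 2 - INR j)) p p
  = conv n j.
Proof.
  intros Hj; rewrite phi43_terminating, sum_f_R0_scal.
  apply sum_eq; intros k Hk; apply vcoef_phi_term; auto.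
Qed.

(* At [j = n + 1] the lower parameters cancel two upper ones and the 4phi3 is a
   terminating balanced 2phi1 at [z = p], which vanishes. *)
Lemma phi_term_sum_top n : sum_f_R0 (phi_term n (S n)) (S n) = 0.
Proof.
  set (x := rpow p (- INR (S n))); set (y := rpow p (INR n + al + be + 2)).
  pose proof (pos_INR n).
  assert (Hxy : rpow p (al + be + 2) = x * y * p) by (unfold x, y; solve_rpow Hp0).
  assert (Hxyp : forall i, 1 - x * y * p * p ^ i <> 0)
    by (intros i; rewrite <- Hxy; pose proof (pos_INR i); neq0 Hp).
  assert (Hpp : forall i, 1 - p * p ^ i <> 0) by (intros i; pose proof (pos_INR i); neq0 Hp).
  rewrite (sum_eq _
    (fun k => qpoch p x k * qpoch p y k / (qpoch p p k * qpoch p (x * y * p) k) * p ^ k)).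
  - rewrite qchu_partial_sum, (qpoch_eq0 p (x * p) (S n) n) by
      (auto || unfold x; rewrite Rmult_assoc, tech_pow_Rmult, <- rpow_nat, <- rpow_plus,
         Rplus_opp_l, rpow_0 by lra; ring).
    unfold Rdiv; ring.
  - intros k Hk; unfold phi_term, phi43_term; fold x; rewrite Hxy.
    replace (2 * INR n + al + be + 3 - INR (S n)) with (INR n + al + be + 2)
      by (rewrite S_INR; ring).
    replace (INR n + be + 2 - INR (S n)) with (be + 1) by (rewrite S_INR; ring).
    replace (al + INR n + 2 - INR (S n)) with (al + 1) by (rewrite S_INR; ring).
    fold y.
    assert (qpoch p p k <> 0) by neq0 Hp.
    assert (qpoch p (x * y * p) k <> 0) by (apply qpoch_neq0; auto).
    assert (qpoch p (rpow p (be + 1)) k <> 0) by neq0 Hp.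
    assert (qpoch p (- rpow p (al + 1)) k <> 0) by neq0 Hp.
    field; auto.
Qed.

Lemma conv_top n : conv n (S n) = 0.
Proof.
  rewrite <- vcoef_phi43, phi43_terminating by lia.
  rewrite phi_term_sum_top; ring.
Qed.

Lemma rpow_half_sq : rpow p (1 / 2) * rpow p (1 / 2) = p.
Proof. solve_rpow Hp0. Qed.

Lemma rpow_half_SS m : rpow p (INR (S (S m)) / 2) = rpow p (INR m / 2) * p.
Proof. rewrite !rpow_half_S, Rmult_assoc, rpow_half_sq; reflexivity. Qed.

Lemma vterm_1 B C D :
  vterm B C D 1 = (1 - B) * (1 - C) / ((1 - p) * (1 - D)) * (-1) * rpow p (1 / 2).
Proof. unfold vterm; cbn [qpoch pow INR]; rewrite !Rmult_1_l, !Rmult_1_r; reflexivity. Qed.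

(* The four terms of the recurrence for [vcoef] at index [m + 2] are rewritten over the
   common Pochhammer symbols [(X0, Y0; p)_m / (p, D1; p)_m], where the parameters of
   [vcoef n'] are [X0, Y0, D0] and those of [vcoef (n' + 1)], [vcoef (n' + 2)] are obtained
   by dividing by [p] and [p^2] (by [p^2] and [p^4] for the denominator parameter). *)
Lemma vterm_SS_shift2 X0 X1 X2 Y0 Y1 Y2 D1 D2 m :
  X2 * p = X1 -> X1 * p = X0 -> Y2 * p = Y1 -> Y1 * p = Y0 -> D2 * p * p = D1 ->
  qpoch p D1 m <> 0 -> 1 - D2 <> 0 -> 1 - D2 * p <> 0 ->
  vterm X2 Y2 D2 (S (S m)) = (1 - X2) * (1 - X1) * (1 - Y2) * (1 - Y1) * qpoch p X0 m * qpoch p Y0 m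
    / (qpoch p p m * (1 - p * p ^ m) * (1 - p * p * p ^ m) * (1 - D2) * (1 - D2 * p) * qpoch p D1 m)
    * (-1) ^ m * rpow p (INR m / 2) * p.
Proof.
  intros <- <- <- <- <- **; pose proof (pos_INR m).
  assert (qpoch p p m <> 0) by neq0 Hp.
  assert (1 - p * p ^ m <> 0) by neq0 Hp.
  assert (1 - p * p * p ^ m <> 0) by neq0 Hp.
  unfold vterm; rewrite rpow_half_SS.
  rewrite !(qpoch_Sl p X2), !(qpoch_Sl p Y2), !(qpoch_Sl p (X2 * p)), !(qpoch_Sl p (Y2 * p)).
  rewrite (qpoch_Sl p D2 (S m)), (qpoch_Sl p (D2 * p)), !qpoch_S.
  cbn [pow]; field; repeat split; auto; rewrite <- ?Rmult_assoc; auto.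
Qed.

Lemma vterm_SS_shift1 X0 X1 Y0 Y1 D1 m :
  X1 * p = X0 -> Y1 * p = Y0 ->
  qpoch p D1 m <> 0 -> 1 - D1 * p ^ m <> 0 -> 1 - D1 * p * p ^ m <> 0 ->
  vterm X1 Y1 D1 (S (S m)) = (1 - X1) * (1 - X1 * p * p ^ m) * (1 - Y1) * (1 - Y1 * p * p ^ m)
    * qpoch p X0 m * qpoch p Y0 m
    / (qpoch p p m * (1 - p * p ^ m) * (1 - p * p * p ^ m) * qpoch p D1 m
       * (1 - D1 * p ^ m) * (1 - D1 * p * p ^ m))
    * (-1) ^ m * rpow p (INR m / 2) * p.
Proof.
  intros <- <- **; pose proof (pos_INR m).
  assert (qpoch p p m <> 0) by neq0 Hp.
  assert (1 - p * p ^ m <> 0) by neq0 Hp.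
  assert (1 - p * (p * p ^ m) <> 0) by neq0 Hp.
  unfold vterm; rewrite rpow_half_SS.
  rewrite (qpoch_S p X1 (S m)), (qpoch_Sl p X1), (qpoch_S p Y1 (S m)), (qpoch_Sl p Y1), !qpoch_S.
  cbn [pow]; field; repeat split; auto; rewrite ?Rmult_assoc; auto.
Qed.

Lemma vterm_S_shift1 X0 X1 Y0 Y1 D1 m :
  X1 * p = X0 -> Y1 * p = Y0 -> qpoch p D1 m <> 0 -> 1 - D1 * p ^ m <> 0 ->
  vterm X1 Y1 D1 (S m) = (1 - X1) * (1 - Y1) * qpoch p X0 m * qpoch p Y0 m
    / (qpoch p p m * (1 - p * p ^ m) * qpoch p D1 m * (1 - D1 * p ^ m))
    * (-1) ^ m * rpow p (INR m / 2) * (- rpow p (1 / 2)).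
Proof.
  intros <- <- **; pose proof (pos_INR m).
  assert (qpoch p p m <> 0) by neq0 Hp.
  assert (1 - p * p ^ m <> 0) by neq0 Hp.
  unfold vterm; rewrite rpow_half_S, (qpoch_Sl p X1), (qpoch_Sl p Y1), !qpoch_S.
  cbn [pow]; field; repeat split; auto.
Qed.

Lemma vterm_shift_den X0 Y0 D0 D1 m :
  D1 * p * p = D0 -> qpoch p D1 m <> 0 -> 1 - D1 * p ^ m <> 0 -> 1 - D1 * p * p ^ m <> 0 ->
  1 - D1 <> 0 -> 1 - D1 * p <> 0 ->
  vterm X0 Y0 D0 m = qpoch p X0 m * qpoch p Y0 m * (1 - D1) * (1 - D1 * p)
    / (qpoch p p m * qpoch p D1 m * (1 - D1 * p ^ m) * (1 - D1 * p * p ^ m))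
    * (-1) ^ m * rpow p (INR m / 2).
Proof.
  intros <- **; pose proof (pos_INR m).
  assert (qpoch p p m <> 0) by neq0 Hp.
  assert (HD : qpoch p (D1 * p * p) m
               = qpoch p D1 m * (1 - D1 * p ^ m) * (1 - D1 * p * p ^ m) / ((1 - D1) * (1 - D1 * p))).
  { assert (E : qpoch p D1 (S (S m)) = (1 - D1) * (1 - D1 * p) * qpoch p (D1 * p * p) m)
      by (rewrite (qpoch_Sl p D1), (qpoch_Sl p (D1 * p)); ring).
    rewrite !qpoch_S in E; cbn [pow] in E; rewrite <- (Rmult_assoc D1 p) in E.
    apply (Rmult_eq_reg_l ((1 - D1) * (1 - D1 * p))); [rewrite <- E; field|]; auto. }
  unfold vterm; rewrite HD; field; repeat split; auto; rewrite <- ?Rmult_assoc; auto.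
Qed.

Lemma vcoef_monomial n : vcoef n =
  vterm (/ (rpow p be * p * p ^ n)) (- / (rpow p al * p * p ^ n))
        (/ (rpow p al * rpow p be * p * p * p ^ n * p ^ n)).
Proof.
  unfold vcoef.
  replace (rpow p (- be - INR n - 1)) with (/ (rpow p be * p * p ^ n)) by solve_rpow Hp0.
  replace (rpow p (- al - INR n - 1)) with (/ (rpow p al * p * p ^ n)) by solve_rpow Hp0.
  replace (rpow p (- 2 * INR n - al - be - 2))
    with (/ (rpow p al * rpow p be * p * p * p ^ n * p ^ n)) by solve_rpow Hp0.
  reflexivity.
Qed.

Lemma rec_c_monomial n : rec_c p al be n =
  (1 - rpow p be / rpow p al) * (1 + rpow p al * rpow p be * p * p * p * p ^ n * p ^ n)
  / ((1 - rpow p al * rpow p be * p * p * p ^ n * p ^ n)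
     * (1 - rpow p al * rpow p be * p * p * p * p * p ^ n * p ^ n))
  * (rpow p al * p * rpow p (1 / 2) * p ^ n).
Proof.
  unfold rec_c; cbv zeta.
  replace (rpow p (be - al)) with (rpow p be / rpow p al) by solve_rpow Hp0.
  replace (rpow p (al + be + 3 + 2 * INR n))
    with (rpow p al * rpow p be * p * p * p * p ^ n * p ^ n) by solve_rpow Hp0.
  replace (rpow p (al + be + 2 + 2 * INR n))
    with (rpow p al * rpow p be * p * p * p ^ n * p ^ n) by solve_rpow Hp0.
  replace (rpow p (al + be + 4 + 2 * INR n))
    with (rpow p al * rpow p be * p * p * p * p * p ^ n * p ^ n) by solve_rpow Hp0.
  replace (rpow p (al + 3 / 2 + INR n)) with (rpow p al * p * rpow p (1 / 2) * p ^ n)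
    by solve_rpow Hp0.
  reflexivity.
Qed.

Lemma vcoef_rec_1 n : vcoef (S n) 1 = vcoef n 1 + rec_c p al be n * vcoef n 0.
Proof.
  pose proof (pos_INR n).
  rewrite !vcoef_monomial, !vterm_1, vterm_0, rec_c_monomial; cbn [pow].
  field; repeat split; neq0 Hp.
Qed.

Lemma rec_d_monomial n : rec_d p al be n =
  (1 - rpow p al * rpow p al * p * p * p ^ n * p ^ n) * (1 - rpow p be * rpow p be * p * p * p ^ n * p ^ n)
  * (rpow p al * rpow p be * p * p * p ^ n * p ^ n)
  / ((1 - rpow p al * rpow p be * p * p ^ n * p ^ n)
     * (1 - rpow p al * rpow p be * p * p * p ^ n * p ^ n) ^ 2
     * (1 - rpow p al * rpow p be * p * p * p * p ^ n * p ^ n)).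
Proof.
  unfold rec_d; cbv zeta.
  replace (rpow p (2 * al + 2 + 2 * INR n))
    with (rpow p al * rpow p al * p * p * p ^ n * p ^ n) by solve_rpow Hp0.
  replace (rpow p (2 * be + 2 + 2 * INR n))
    with (rpow p be * rpow p be * p * p * p ^ n * p ^ n) by solve_rpow Hp0.
  replace (rpow p (2 * INR n + al + be + 2))
    with (rpow p al * rpow p be * p * p * p ^ n * p ^ n) by solve_rpow Hp0.
  replace (rpow p (al + be + 1 + 2 * INR n))
    with (rpow p al * rpow p be * p * p ^ n * p ^ n) by solve_rpow Hp0.
  replace (rpow p (al + be + 2 + 2 * INR n))
    with (rpow p al * rpow p be * p * p * p ^ n * p ^ n) by solve_rpow Hp0.
  replace (rpow p (al + be + 3 + 2 * INR n))
    with (rpow p al * rpow p be * p * p * p * p ^ n * p ^ n) by solve_rpow Hp0.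
  reflexivity.
Qed.

Lemma vcoef_rec_SS n m : (m <= n)%nat ->
  vcoef (S (S n)) (S (S m)) = vcoef (S n) (S (S m)) + rec_c p al be (S n) * vcoef (S n) (S m)
                              + rec_d p al be (S n) * vcoef n m.
Proof.
  intros Hmn; apply le_INR in Hmn; pose proof (pos_INR m).
  rewrite !vcoef_monomial.
  rewrite (vterm_SS_shift2 (/ (rpow p be * p * p ^ n)) (/ (rpow p be * p * p ^ S n))
             (/ (rpow p be * p * p ^ S (S n)))
             (- / (rpow p al * p * p ^ n)) (- / (rpow p al * p * p ^ S n))
             (- / (rpow p al * p * p ^ S (S n)))
             (/ (rpow p al * rpow p be * p * p * p ^ S n * p ^ S n))).
  2-6: solve_rpow Hp0.
  2-4: neq0 Hp.
  rewrite (vterm_SS_shift1 (/ (rpow p be * p * p ^ n)) (/ (rpow p be * p * p ^ S n))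
             (- / (rpow p al * p * p ^ n)) (- / (rpow p al * p * p ^ S n))).
  2-3: solve_rpow Hp0.
  2-4: neq0 Hp.
  rewrite (vterm_S_shift1 (/ (rpow p be * p * p ^ n)) (/ (rpow p be * p * p ^ S n))
             (- / (rpow p al * p * p ^ n)) (- / (rpow p al * p * p ^ S n))).
  2-3: solve_rpow Hp0.
  2-3: neq0 Hp.
  rewrite (vterm_shift_den _ _ _ (/ (rpow p al * rpow p be * p * p * p ^ S n * p ^ S n))).
  2: solve_rpow Hp0.
  2-6: neq0 Hp.
  rewrite rec_c_monomial, rec_d_monomial.
  (* Written as [p / p^(1/2)], the half power cancels against the one of [vcoef (S n) (S m)],
     so [field] needs no relation between [p^(1/2)] and [p]. *)
  replace (rpow p al * p * rpow p (1 / 2) * p ^ S n)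
    with (rpow p al * p * p * p ^ S n / rpow p (1 / 2)) by solve_rpow Hp0.
  cbn [pow]; field; repeat split; neq0 Hp.
Qed.

Lemma vcoef_rec n m : (m <= S n)%nat ->
  vcoef (S n) m = vcoef n m + rec_c p al be n * shift (vcoef n) m
                  + rec_d p al be n * shift (shift (vcoef (n - 1))) m.
Proof.
  intros Hm; destruct m as [|[|m]]; cbn [shift].
  - unfold vcoef; rewrite !vterm_0; ring.
  - rewrite vcoef_rec_1; ring.
  - destruct n as [|n]; [lia|].
    rewrite Nat.sub_succ, Nat.sub_0_r, vcoef_rec_SS by lia; ring.
Qed.

Lemma conv_rec n j : (j <= S n)%nat ->
  conv (S n) j = conv n j + rec_c p al be n * shift (conv n) j
                 + rec_d p al be n * shift (shift (conv (n - 1))) j.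
Proof.
  intros Hj; unfold conv.
  rewrite (sum_eq _ (fun k => ucoef k * vcoef n (j - k)
      + rec_c p al be n * (ucoef k * shift (vcoef n) (j - k))
      + rec_d p al be n * (ucoef k * shift (shift (vcoef (n - 1))) (j - k))))
    by (intros k Hk; rewrite vcoef_rec by lia; ring).
  rewrite !sum_plus, <- !sum_f_R0_scal, !sum_f_R0_shift.
  destruct j as [|j]; [reflexivity|]; cbn [shift]; rewrite sum_f_R0_shift; reflexivity.
Qed.

Lemma coef_poly_conv_S mu n :
  coef_poly (conv (S n)) mu (S n) =
  Cplus (Cmult (Cplus mu (RtoC (rec_c p al be n))) (coef_poly (conv n) mu n))
        (Cmult (RtoC (rec_d p al be n)) (coef_poly (shift (conv (n - 1))) mu n)).
Proof.
  rewrite (coef_poly_ext _ (fun j => conv n j + rec_c p al be n * shift (conv n) j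
                                     + rec_d p al be n * shift (shift (conv (n - 1))) j))
    by (intros j Hj; apply conv_rec; exact Hj).
  rewrite coef_poly_lin, coef_poly_S, !coef_poly_shift, conv_top; ring.
Qed.

Lemma coef_poly_conv_0 mu : coef_poly (conv 0) mu 0 = RtoC 1.
Proof.
  unfold coef_poly, conv; cbn; unfold vcoef.
  rewrite ucoef_0, vterm_0, Rmult_1_l; apply Cmult_1_r.
Qed.

Lemma rhs_term_conv n mu j : (j <= n)%nat ->
  rhs_term p al be n mu j = Cmult (RtoC (conv n j)) (Defs.Cpow mu (n - j)).
Proof. intros Hj; rewrite <- vcoef_phi43 by lia; reflexivity. Qed.

Lemma bpoly_coef_poly mu n : bpoly p al be n mu = coef_poly (conv n) mu n.
Proof.
  enough (H : bpoly p al be n mu = coef_poly (conv n) mu n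
              /\ bpoly p al be (S n) mu = coef_poly (conv (S n)) mu (S n)) by apply H.
  induction n as [|n [IH0 IH1]]; split; [| |exact IH1|].
  - rewrite bpoly_0, coef_poly_conv_0; reflexivity.
  - rewrite bpoly_1, coef_poly_conv_S, coef_poly_shift_0, coef_poly_conv_0; simpl; ring.
  - rewrite bpoly_SS, coef_poly_conv_S, Nat.sub_succ, Nat.sub_0_r, coef_poly_shift, <- IH0, <- IH1.
    reflexivity.
Qed.

End Coefficients.

Theorem theorem4p1 (q alpha beta : R) :
  0 < q < 1 -> -1 < alpha -> -1 < beta ->
  let p := sqrt q in
  forall (n : nat) (mu : C),
    bpoly p alpha beta n mu = Csum (rhs_term p alpha beta n mu) n.
Proof.
  intros Hq Hal Hbe p n mu.
  assert (Hp : 0 < p < 1).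
  { unfold p; split; [apply sqrt_lt_R0; lra|].
    rewrite <- sqrt_1; apply sqrt_lt_1; lra. }
  rewrite bpoly_coef_poly by auto; apply Csum_ext; intros j Hj.
  rewrite rhs_term_conv by auto; reflexivity.
Qed.
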